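(* Let $S\subset\mathbb{R}^n$ be a polyhedron and $U_0=\{A\in\mathbb{R}^{n\times n}\mid \mathrm{Tr}(V_j^TA)\le v_j,\ j=1,\dots,s\}$ a polyhedron of matrices, and let $S_0^\infty=\{x\in S\mid A^tx\in S\ \text{for all } A\in U_0 \text{ and all integers } t\ge1\}$. Suppose that $S$ is compact and $S_0^\infty$ is full-dimensional. Then $U_0$ is bounded and every matrix in $U_0$ has spectral radius less than or equal to one.
   Context: Full-dimensional means having nonempty interior. The spectral radius of a square matrix is the maximum modulus of its eigenvalues. *)

From HB Require Import structures.
From mathcomp Require Import all_boot all_order all_algebra.
From mathcomp Require Import all_classical all_reals all_analysis.
From mathcomp Require Import complex.
Set Implicit Arguments. Unset Strict Implicit. Unset Printing Implicit Defensive.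
Import Order.TTheory GRing.Theory Num.Theory.
Import numFieldTopology.Exports numFieldNormedType.Exports.
Local Open Scope ring_scope.
Local Open Scope classical_set_scope.

Definition polyhedron (R : realType) (n : nat) (S : set 'cV[R]_n) : Prop :=
  exists (m : nat) (C : 'M[R]_(m, n)) (d : 'cV[R]_m),
    S = [set x | forall i : 'I_m, (C *m x) i ord0 <= d i ord0].

Definition Upoly (R : realType) (n s : nat) (V : 'I_s -> 'M[R]_n) (v : 'I_s -> R)
  : set 'M[R]_n :=
  [set A | forall j : 'I_s, \tr ((V j)^T *m A) <= v j].

Definition Sinf (R : realType) (n : nat) (S : set 'cV[R]_n) (U : set 'M[R]_n)
  : set 'cV[R]_n :=
  [set x | S x /\ forall A, U A -> forall t : nat, (1 <= t)%N -> S (A ^+ t *m x)].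

Definition cmod (R : rcfType) (z : R[i]) : R :=
  Num.sqrt (complex.Re z ^+ 2 + complex.Im z ^+ 2).

(* Spectral radius: the maximum modulus of the (complex) eigenvalues of A.
   The set of eigenvalues is finite, so the supremum is a maximum
   (for n = 0 there are no eigenvalues). *)
Definition spectral_radius (R : realType) (n : nat) (A : 'M[R]_n) : R :=
  sup [set cmod z | z in [set z : R[i] |
         eigenvalue (map_mx (fun a : R => a%:C%C) A) z]].

(* Pick a ball B(x0, e) inside S_0^infty and M with S inside B(0, M).  For
   A in U_0 and t >= 1, A^t maps both x0 and x0 + (e/2) e_j into S, so
   (e/2) |(A^t)_ij| <= 2M: the powers of matrices of U_0 are uniformly
   bounded, and for t = 1 so is U_0.  If z is a complex eigenvalue of A with
   left eigenvector w, then z^t w = w A^t, so |z|^t stays bounded in t, which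
   forces |z| <= 1. *)
From HB Require Import structures.
From mathcomp Require Import all_boot all_order all_algebra.
From mathcomp Require Import all_classical all_reals all_analysis.
From mathcomp Require Import complex.
From mathcomp Require Import ring lra.
Set Implicit Arguments. Unset Strict Implicit. Unset Printing Implicit Defensive.
Import Order.TTheory GRing.Theory Num.Theory.
Import numFieldTopology.Exports numFieldNormedType.Exports.
Local Open Scope ring_scope.
Local Open Scope classical_set_scope.

Section MatrixNorm.
Variables (R : realDomainType) (m n : nat).

Lemma mx_norm_ge_entry (M : 'M[R]_(m, n)) i j : `|M i j| <= `|M|.
Proof.
rewrite [leRHS]/Num.Def.normr /= mx_normrE; apply/bigmax_geP; right => /=.
by exists (i, j).
Qed.

Lemma mx_norm_le_entries (M : 'M[R]_(m, n)) c :
  0 <= c -> (forall i j, `|M i j| <= c) -> `|M| <= c.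
Proof.
move=> c0 Mc; rewrite [leLHS]/Num.Def.normr /= mx_normrE.
by apply: bigmax_le => // -[i j] _; exact: Mc.
Qed.

End MatrixNorm.

Lemma bounded_set_le (R : realFieldType) (V : normedModType R) (B : set V) c :
  (forall x, B x -> `|x| <= c) -> bounded_set B.
Proof.
move=> Bc; rewrite /= /bounded_near; near=> M => x Bx /=.
apply: le_trans (Bc x Bx) _; near: M; exact: nbhs_pinfty_ge (num_real c).
Unshelve. all: by end_near. Qed.

Lemma bounded_set_mx_of_interior (R : realFieldType) (m n : nat)
    (X : set 'cV[R]_n) (Y : set 'cV[R]_m) (F : set 'M[R]_(m, n)) :
  interior X !=set0 -> bounded_set Y ->
  (forall B x, F B -> X x -> Y (B *m x)) -> bounded_set F.
Proof.
move=> [x0 /nbhs_ballP [e e0 ballX]] bY FXY.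
have [M M0 YM] := @ex_strict_bound_gt0 _ _ _ id (globally Y) _ bY.
have e20 : 0 < e / 2 by rewrite divr_gt0.
apply: (@bounded_set_le _ _ _ (2 * M / (e / 2))) => B FB.
apply: mx_norm_le_entries => [|i j]; first by rewrite divr_ge0 ?mulr_ge0 ?ltW.
set y := x0 + (e / 2) *: delta_mx j 0.
have Xy : X y.
  apply: ballX; rewrite -ball_normE /ball_ /= /y opprD addrA subrr add0r normrN.
  apply: (@le_lt_trans _ _ (e / 2)); last by lra.
  apply: mx_norm_le_entries => [|a b]; first exact: ltW.
  rewrite !mxE normrM gtr0_norm //.
  by case: (_ && _); rewrite ?normr1 ?mulr1 // normr0 mulr0 ltW.
have Bcol : B *m y - B *m x0 = (e / 2) *: col j B.
  by rewrite /y mulmxDr addrAC subrr add0r -scalemxAr colE.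
have BijE : (e / 2) * `|B i j| <= `|B *m y - B *m x0|.
  have := mx_norm_ge_entry (B *m y - B *m x0) i 0.
  by rewrite Bcol !mxE normrM gtr0_norm.
rewrite ler_pdivlMr // mulrC; apply: (le_trans BijE).
have ByM : `|B *m y| < M := YM _ (FXY _ _ FB Xy).
have Bx0M : `|B *m x0| < M := YM _ (FXY _ _ FB (ballX _ (ballxx _ e0))).
have := ler_normB (B *m y) (B *m x0); lra.
Qed.

Lemma bernoulli_ineq (R : realDomainType) (h : R) t :
  0 <= h -> 1 + t%:R * h <= (1 + h) ^+ t.
Proof.
move=> h0; elim: t => [|t IH]; first by rewrite mul0r addr0 expr0.
rewrite exprS -natr1.
have : (1 + h) * (1 + t%:R * h) <= (1 + h) * (1 + h) ^+ t.
  by rewrite ler_wpM2l // addr_ge0.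
have : 0 <= t%:R * (h * h) :> R by rewrite mulr_ge0 ?mulr_ge0.
nra.
Qed.

Lemma exprn_bounded_le1 (R : archiRealFieldType) (x C : R) :
  0 <= x -> (forall t, (0 < t)%N -> x ^+ t <= C) -> x <= 1.
Proof.
move=> x0 xC; rewrite leNgt; apply/negP => x1.
have h0 : 0 < x - 1 by rewrite subr_gt0.
set t := (Num.truncn (C / (x - 1))).+1.
have : C < t%:R * (x - 1) by rewrite -ltr_pdivrMr // truncnS_gt.
have := bernoulli_ineq t (ltW h0); rewrite [1 + (x - 1)]addrC subrK.
have := xC t isT; lra.
Qed.

Lemma map_mxX (aR rR : pzRingType) (f : {rmorphism aR -> rR}) n
    (A : 'M[aR]_n) t :
  map_mx f (A ^+ t) = map_mx f A ^+ t.
Proof.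
elim: t => [|t IH]; first by rewrite !expr0 map_mx1.
by rewrite !exprSr -!mulmxE map_mxM IH.
Qed.

Lemma left_eigenvectorX (K : comPzRingType) n (M : 'M[K]_n) (w : 'rV_n) z t :
  w *m M = z *: w -> w *m M ^+ t = z ^+ t *: w.
Proof.
move=> wM; elim: t => [|t IH]; first by rewrite !expr0 scale1r mulmx1.
by rewrite exprSr -mulmxE mulmxA IH -scalemxAl wM scalerA exprSr.
Qed.

Section ComplexModulus.
Variable R : rcfType.
Import Normc.

Lemma cmodE (z : R[i]) : cmod z = normc z.
Proof. by case: z. Qed.

Lemma normc_ge0 (z : R[i]) : 0 <= normc z.
Proof. by case: z => a b; rewrite /normc sqrtr_ge0. Qed.

Lemma normc_real (r : R) : normc (r%:C)%C = `|r|.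
Proof. by rewrite /normc /= expr0n /= addr0 sqrtr_sqr. Qed.

Lemma normcX (z : R[i]) t : normc (z ^+ t) = normc z ^+ t.
Proof. by elim: t => [|t IH]; rewrite ?normc1 // !exprS normcM IH. Qed.

Lemma normc_sum (I : finType) (F : I -> R[i]) :
  normc (\sum_i F i) <= \sum_i normc (F i).
Proof.
elim/big_ind2: _ => [|a b c d ab cd|//]; first by rewrite normc0.
by apply: le_trans (le_normcD _ _) _; exact: lerD.
Qed.

End ComplexModulus.

Lemma eigenvalue_cmod_le1 (R : realType) n (A : 'M[R]_n) K z :
  (forall t, (0 < t)%N -> `|A ^+ t| <= K) ->
  eigenvalue (map_mx (real_complex R) A) z -> cmod z <= 1.
Proof.
move=> AK /eigenvalueP [w wA w_neq0]; rewrite cmodE.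
have [k wk_neq0] : exists k, w ord0 k != 0.
  case: (pickP (fun k => w ord0 k != 0)) => [k wk|w0]; first by exists k.
  case/negP: w_neq0; apply/eqP/matrixP => i k; rewrite (ord1 i) !mxE.
  by apply/eqP; rewrite -[_ == _]negbK w0.
have wk_gt0 : 0 < Normc.normc (w ord0 k).
  rewrite lt0r normc_ge0 andbT.
  by apply: contra wk_neq0 => /eqP/Normc.eq0_normc ->.
set W := \sum_i Normc.normc (w ord0 i).
apply: (@exprn_bounded_le1 _ _ (W * K / Normc.normc (w ord0 k))).
  exact: normc_ge0.
move=> t t_gt0; rewrite ler_pdivlMr //.
have /matrixP /(_ ord0 k) := left_eigenvectorX t wA.
rewrite -map_mxX !mxE -normcX -Normc.normcM => <-.
apply: le_trans (normc_sum _) _; rewrite /W mulr_suml; apply: ler_sum => i _.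
rewrite mxE Normc.normcM normc_real ler_wpM2l ?normc_ge0 //.
exact: le_trans (mx_norm_ge_entry _ _ _) (AK t t_gt0).
Qed.

Lemma spectral_radius_le (R : realType) n (A : 'M[R]_n) c : 0 <= c ->
  (forall z, eigenvalue (map_mx (real_complex R) A) z -> cmod z <= c) ->
  spectral_radius A <= c.
Proof.
move=> c0 eigc; rewrite /spectral_radius.
set E := [set cmod z | z in _].
have [[r Er]|E0] := pselect (E !=set0).
  by apply: ge_sup => [|_ [z Az <-]]; [exists r | exact: eigc].
suff -> : E = set0 by rewrite sup0.
by apply/seteqP; split=> // y Ey; apply: E0; exists y.
Qed.

Theorem proposition15 (R : realType) (n s : nat) (S : set 'cV[R]_n)
    (V : 'I_s -> 'M[R]_n) (v : 'I_s -> R) :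
  polyhedron S ->
  compact S ->
  interior (Sinf S (Upoly V v)) !=set0 ->
  bounded_set (Upoly V v) /\
  (forall A : 'M[R]_n, Upoly V v A -> spectral_radius A <= 1).
Proof.
move=> _ cS Sinf_int.
set U := Upoly V v.
set P := [set A ^+ t | A in U & t in [set t | (0 < t)%N]].
have bP : bounded_set P.
  apply: bounded_set_mx_of_interior Sinf_int (compact_bounded cS) _.
  by move=> _ x [A UA [t t_gt0 <-]] [_]; exact.
have [K _ PK] := @ex_strict_bound_gt0 _ _ _ id (globally P) _ bP.
have powK A t : U A -> (0 < t)%N -> `|A ^+ t| <= K.
  by move=> UA t_gt0; apply/ltW/PK; exists A => //; exists t.
split.
  by apply: (bounded_set_le (c := K)) => A UA; rewrite -[A]expr1 powK.
move=> A UA; apply: spectral_radius_le => // z.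
by apply: (eigenvalue_cmod_le1 (K := K)) => t; exact: powK.
Qed.
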